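(* Every partial Steiner quadruple system of order $n$ has a cyclically $\ell$-good sequencing for each positive integer $\ell \leq 0.164\, n^{1/3}$.
   Context: A partial Steiner quadruple system of order $n$ is a pair $(X,\mathcal{B})$ where $X$ is an $n$-set of vertices ($n\ge 4$) and $\mathcal{B}$ is a collection of $4$-subsets of $X$ (blocks) such that each $3$-subset of $X$ is contained in at most one block. An independent set is a subset $Y\subseteq X$ containing no block. Let $\mathbb{Z}_n=\{0,\ldots,n-1\}$ be the cyclic group of order $n$. A sequencing is a bijection $\varphi:\mathbb{Z}_n\to X$. A set $S\subseteq X$ is cyclically consecutive if $S=\{\varphi(i),\varphi(i+1),\ldots,\varphi(i+|S|-1)\}$ for some $i\in\mathbb{Z}_n$ (addition in $\mathbb{Z}_n$). For a positive integer $\ell$, a sequencing is cyclically $\ell$-good if every set of $\ell$ cyclically consecutive vertices is an independent set. *)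

From mathcomp Require Import all_boot.
Set Implicit Arguments. Unset Strict Implicit. Unset Printing Implicit Defensive.

Definition partial_SQS (X : finType) (B : {set {set X}}) : Prop :=
  (forall b, b \in B -> #|b| = 4) /\
  (forall t : {set X}, #|t| = 3 ->
     forall b1 b2, b1 \in B -> b2 \in B -> t \subset b1 -> t \subset b2 -> b1 = b2).

Definition independent (X : finType) (B : {set {set X}}) (Y : {set X}) : Prop :=
  forall b, b \in B -> ~ (b \subset Y).

Definition cyc_window (X : finType) (n : nat) (phi : 'I_n -> X) (i : 'I_n) (l : nat)
  : {set X} :=
  [set x | [exists j : 'I_l, exists k : 'I_n,
             (val k == (val i + val j) %% n) && (phi k == x)]].

Definition cyclically_good (X : finType) (B : {set {set X}}) (n : nat)
  (phi : 'I_n -> X) (l : nat) : Prop :=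
  forall i : 'I_n, independent B (cyc_window phi i l).

From mathcomp Require Import all_boot fingroup perm zify.
Set Implicit Arguments. Unset Strict Implicit. Unset Printing Implicit Defensive.

(* Take a uniformly random injection f from the positions Z_n to the vertices and,
   for every 4-set S of positions inside a window of l consecutive positions and every
   block b, the bad event f(S) = b.  Composing f with a permutation of the vertices that
   moves b onto an arbitrary 4-set T and fixes everything outside b ∪ T shows that, given
   that f avoids any family of events sharing neither a position nor a vertex with (S, b),
   the event (S, b) has probability at most 1 / C(n, 4).  An event shares a position or
   a vertex with at most 5 C(2l-1, 3) C(n, 3) others (a position lies in at most
   C(2l-1, 3) windowed 4-sets, there are at most C(n, 3) / 4 blocks and at most
   C(n-1, 2) / 3 through a vertex), which is at most C(n, 4) / 4 once
   n >= 80 C(2l-1, 3) + 3.  The lopsided local lemma, in counting form, then yields an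
   injection avoiding every bad event. *)

Lemma leq_card_bigcup (I T : finType) (P : pred I) (F : I -> {set T}) :
  #|\bigcup_(i | P i) F i| <= \sum_(i | P i) #|F i|.
Proof.
elim/big_rec2: _ => [|i m U _ IH]; first by rewrite cards0.
by rewrite (leq_trans (leq_card_setU _ _).1) // leq_add2l.
Qed.

Section CountingLocalLemma.

Variables (T I : finType) (Omega : {set T}) (A : I -> {set T}).

Definition avoiding (J : {set I}) : {set T} :=
  [set w in Omega | [forall e in J, w \notin A e]].

Lemma avoiding0 : avoiding set0 = Omega.
Proof.
by apply/setP=> w; rewrite inE andb_idr // => _; apply/forall_inP=> e; rewrite inE.
Qed.

Lemma avoidingS (J K : {set I}) : J \subset K -> avoiding K \subset avoiding J.
Proof.
move=> sJK; apply/subsetP=> w; rewrite !inE => /andP[-> /forall_inP avoidK].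
by apply/forall_inP=> e /(subsetP sJK); apply: avoidK.
Qed.

Lemma avoidingD1 (J : {set I}) e : e \in J -> avoiding J = avoiding (J :\ e) :\: A e.
Proof.
move=> eJ; apply/setP=> w; rewrite !inE andbCA; congr (_ && _).
apply/forall_inP/andP => [avoidJ | [notAe /forall_inP avoidJe] e' e'J].
  by split; [apply: avoidJ | apply/forall_inP=> e' /setD1P[_ /avoidJ]].
by have [-> // | ne'e] := eqVneq e' e; apply: avoidJe; rewrite !inE ne'e.
Qed.

Lemma leq_card_avoiding (M J : {set I}) : M \subset J ->
  #|avoiding M| <= #|avoiding J| + \sum_(e in J :\: M) #|avoiding M :&: A e|.
Proof.
move=> sMJ; apply: leq_trans (leq_add (leqnn _) (leq_card_bigcup _ _)).
apply: leq_trans (leq_card_setU _ _).1; apply: subset_leq_card.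
apply/subsetP=> w wM; rewrite inE; have [// | /= wJ] := boolP (w \in avoiding J).
move: wM wJ; rewrite !inE => /andP[wO /forall_inP avoidM].
rewrite wO /= => /forall_inPn[e eJ /negbNE wAe].
apply/bigcupP; exists e; last by rewrite !inE wO wAe andbT; apply/forall_inP.
by rewrite inE eJ andbT; apply: contraL wAe => /avoidM.
Qed.

Variables (dep : rel I) (EV : {set I}) (C : nat).

Hypothesis lopsided : forall e (M : {set I}), e \in EV -> M \subset EV ->
  (forall e', e' \in M -> ~~ dep e e') -> C * #|avoiding M :&: A e| <= #|avoiding M|.
Hypothesis sparse : forall e, e \in EV -> 4 * #|[set e' in EV | dep e e']| <= C.

Lemma avoiding_local_bound (J : {set I}) e : J \subset EV -> e \in EV ->
  C * #|avoiding J :&: A e| <= 2 * #|avoiding J|.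
Proof.
have [k] := ubnP #|J|; elim: k J e => // k IHk J e ltJk sJE eE.
set M := [set e' in J | ~~ dep e e'].
have sMJ : M \subset J by apply/subsetP=> e'; rewrite inE => /andP[].
have indepM : forall e', e' \in M -> ~~ dep e e' by move=> e'; rewrite inE => /andP[].
have lopM := lopsided eE (subset_trans sMJ sJE) indepM.
have leJM : #|avoiding J :&: A e| <= #|avoiding M :&: A e|.
  by apply/subset_leq_card/setSI/avoidingS.
have IH : forall e', e' \in J :\: M -> C * #|avoiding M :&: A e'| <= 2 * #|avoiding M|.
  move=> e' /setDP[e'J e'M]; apply: IHk (subset_trans sMJ sJE) (subsetP sJE _ e'J).
  suff : #|M| < #|J| by lia.
  by apply/proper_card/properP; split=> //; exists e'.
have degJ : 4 * #|J :\: M| <= C.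
  apply: leq_trans (sparse eE); rewrite leq_mul2l; apply/orP; right.
  apply/subset_leq_card/subsetP=> e' /setDP[e'J]; rewrite !inE e'J (subsetP sJE) //=.
  by rewrite negbK.
have sumJM : C * \sum_(e' in J :\: M) #|avoiding M :&: A e'| <=
              #|J :\: M| * (2 * #|avoiding M|).
  by rewrite big_distrr -sum_nat_const; apply: leq_sum.
have coverM := leq_card_avoiding sMJ.
have [-> // | C_gt0] := posnP C.
have leMJ : #|avoiding M| <= 2 * #|avoiding J| by nia.
nia.
Qed.

Lemma avoiding_gt0 (J : {set I}) : 2 < C -> 0 < #|Omega| -> J \subset EV -> 0 < #|avoiding J|.
Proof.
move=> C_gt2 Omega_gt0; have [k] := ubnP #|J|; elim: k J => // k IHk J ltJk sJE.
have [-> | [e eJ]] := set_0Vmem J; first by rewrite avoiding0.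
have sJeE : J :\ e \subset EV by apply: subset_trans sJE; apply: subD1set.
have := avoiding_local_bound sJeE (subsetP sJE e eJ).
have ltJek : #|J :\ e| < k by move: ltJk; rewrite (cardsD1 e J) eJ; lia.
have := IHk _ ltJek sJeE; rewrite -(cardsID (A e) (avoiding (J :\ e))) -avoidingD1 //.
nia.
Qed.

End CountingLocalLemma.

Section Switching.

Variables D X : finType.

Definition injections : {set {ffun D -> X}} := [set f : {ffun D -> X} | injectiveb f].

Definition hitting (e : {set D} * {set X}) : {set {ffun D -> X}} :=
  [set f : {ffun D -> X} | [set f x | x in e.1] == e.2].

Definition meets (e e' : {set D} * {set X}) : bool :=
  ~~ [disjoint e.1 & e'.1] || ~~ [disjoint e.2 & e'.2].

Lemma perm_swap (A C : {set X}) : #|A| = #|C| ->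
  exists s : {perm X}, s @: A = C /\ forall x, x \notin A -> x \notin C -> s x = x.
Proof.
have [k] := ubnP #|A :\: C|; elim: k A => // k IHk A ltACk cardAC.
have [sAC | /subsetPn[a aA aNC]] := boolP (A \subset C).
  exists 1%g; split=> [|x _ _]; last by rewrite perm1.
  rewrite (eq_imset _ (@perm1 _)) imset_id; apply/eqP.
  by rewrite eqEcard sAC cardAC leqnn.
have : 0 < #|C :\: A|.
  have : 0 < #|A :\: C| by apply/card_gt0P; exists a; rewrite inE aNC.
  have := cardsID A C; have := cardsID C A; rewrite setIC; lia.
case/card_gt0P=> c /setDP[cC cNA].
have tAE : tperm a c @: A = tperm a c @^-1: A by apply: can2_imset_pre; apply: tpermK.
have ltA'Ck : #|(tperm a c @: A) :\: C| < k.
  suff : #|(tperm a c @: A) :\: C| < #|A :\: C| by lia.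
  apply: proper_card; apply/properP; split; last first.
    exists a; first by rewrite in_setD aNC aA.
    by rewrite in_setD tAE inE tpermL (negPf cNA) andbF.
  apply/subsetP=> x; rewrite in_setD tAE inE => /andP[xNC]; rewrite in_setD xNC /=.
  case: tpermP => [_ | xc | _ _ //]; first by rewrite (negPf cNA).
  by move: xNC; rewrite xc cC.
have [s' [s'A' s'fix]] := IHk _ ltA'Ck (etrans (card_imset _ (@perm_inj _ _)) cardAC).
exists (tperm a c * s')%g; split.
  by rewrite -s'A' -imset_comp; apply: eq_imset => x; rewrite permM.
move=> x xNA xNC.
have [ax cx] : a != x /\ c != x.
  by split; [apply: contraNneq xNA => <- | apply: contraNneq xNC => <-].
by rewrite permM tpermD // s'fix // tAE inE tpermD.
Qed.

Lemma perm_swap_back (s : {perm X}) (A C : {set X}) :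
  s @: A = C -> (forall x, x \notin A -> x \notin C -> s x = x) ->
  {in C :\: A, forall y, s y \in A}.
Proof.
move=> sAC sfix y /setDP[yC yNA]; apply: contraT => syNA.
have [syC | syNC] := boolP (s y \in C).
  by move: syC; rewrite -sAC mem_imset ?(negPf yNA) //; apply: perm_inj.
by move: yC; rewrite -(perm_inj (sfix _ syNA syNC)) (negPf syNC).
Qed.

Lemma leq_card_avoiding_hitting (M : {set {set D} * {set X}}) S (b T : {set X}) :
  #|b| = #|T| ->
  (forall e', e' \in M -> ~~ meets (S, b) e') ->
  #|avoiding injections hitting M :&: hitting (S, b)| <=
  #|avoiding injections hitting M :&: hitting (S, T)|.
Proof.
move=> cardbT indep; have [s [sbT sfix]] := perm_swap cardbT.
pose g (f : {ffun D -> X}) := [ffun k => s (f k)].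
have g_inj : injective g.
  by move=> f1 f2 /ffunP eqg; apply/ffunP=> k; have := eqg k; rewrite !ffunE => /perm_inj.
rewrite -(card_imset _ g_inj); apply/subset_leq_card/subsetP=> _ /imsetP[f + ->].
rewrite !inE /= => /andP[/andP[/injectiveP f_inj /forall_inP f_avoids] /eqP fSb].
have gfST : [set g f k | k in S] = T.
  by rewrite -sbT -fSb -imset_comp; apply: eq_imset => k; rewrite ffunE.
rewrite gfST eqxx andbT; apply/andP; split.
  by apply/injectiveP=> k1 k2; rewrite !ffunE => /perm_inj/f_inj.
apply/forall_inP=> -[S' b'] e'M; rewrite inE; apply/eqP=> /= gfS'b'.
have /norP[/negbNE /= dS /negbNE /= db] := indep _ e'M.
(* If g f hit (S', b'), then f would take no value of b or T on S' (values in T :\: b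
   are sent into b, which misses b'), so g f = f there and f would hit (S', b'). *)
have gf_agrees : {in S', g f =1 f}.
  move=> k kS'; rewrite ffunE.
  have fkNb : f k \notin b.
    rewrite -fSb; apply: contraL kS' => /imsetP[k' k'S /f_inj ->].
    by rewrite (disjointFr dS k'S).
  rewrite sfix //; apply/negP=> fkT.
  have sfk_b : s (f k) \in b by apply: perm_swap_back sbT sfix _ _; rewrite inE fkT fkNb.
  have sfk_b' : s (f k) \in b' by rewrite -gfS'b'; apply/imsetP; exists k; rewrite ?ffunE.
  by rewrite (disjointFr db sfk_b) in sfk_b'.
by have := f_avoids _ e'M; rewrite inE -gfS'b' (eq_in_imset gf_agrees) eqxx.
Qed.

Lemma switching (e : {set D} * {set X}) (M : {set {set D} * {set X}}) :
  #|e.1| = #|e.2| -> (forall e', e' \in M -> ~~ meets e e') ->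
  'C(#|X|, #|e.1|) * #|avoiding injections hitting M :&: hitting e| <=
  #|avoiding injections hitting M|.
Proof.
case: e => S b /= cardSb indep.
set good := avoiding injections hitting M.
have by_image :
    #|good| = \sum_(T in [set T : {set X} | #|T| == #|S|]) #|good :&: hitting (S, T)|.
  rewrite -sum1_card (partition_big (fun f : {ffun D -> X} => [set f k | k in S])
                        (mem [set T : {set X} | #|T| == #|S|])) /=.
    by apply: eq_bigr => T _; rewrite -sum1_card; apply: eq_bigl => f; rewrite !inE.
  move=> f; rewrite !inE => /andP[/injectiveP f_inj _].
  by rewrite card_imset.
rewrite by_image -card_draws -sum_nat_const; apply: leq_sum => T; rewrite inE => /eqP cardT.
by apply: leq_card_avoiding_hitting; rewrite // cardT.
Qed.

End Switching.

Arguments hitting {D X} e.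

Section Windows.

Variable n : nat.

Definition window (s m : nat) : {set 'I_n.+1} :=
  [set inord ((s + j) %% n.+1) | j : 'I_m].

Definition windowed_sets (l k : nat) : {set {set 'I_n.+1}} :=
  [set S : {set 'I_n.+1} | (#|S| == k) && [exists i : 'I_n.+1, S \subset window i l]].

Lemma card_window s m : #|window s m| <= m.
Proof. by rewrite (leq_trans (leq_imset_card _ _)) // card_ord. Qed.

Lemma mem_window s m (k : 'I_n.+1) :
  (k \in window s m) = [exists j : 'I_m, val k == (s + j) %% n.+1].
Proof.
apply/imsetP/existsP=> [[j _ ->] | [j /eqP kE]]; exists j => //.
  by apply/eqP; rewrite /= inordK ?ltn_pmod.
by apply: val_inj; rewrite /= inordK ?ltn_pmod.
Qed.

(* [p + l.-1 * n] is [p - (l - 1)] modulo [n.+1]: the arc of the [2l - 1] positions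
   centred at [p], which contains every window of length [l] through [p]. *)
Lemma window_arc s l (p q : 'I_n.+1) :
  p \in window s l -> q \in window s l -> q \in window (p + l.-1 * n) l.*2.-1.
Proof.
rewrite !mem_window => /existsP[j /eqP pE] /existsP[j' /eqP qE].
have jl := ltn_ord j; have j'l := ltn_ord j'.
have t_lt : j' + (l.-1 - j) < l.*2.-1 by lia.
apply/existsP; exists (Ordinal t_lt); rewrite /= qE pE -addnA modnDml.
have -> : s + j + (l.-1 * n + (j' + (l.-1 - j))) = l.-1 * n.+1 + (s + j') by lia.
by rewrite modnMDl.
Qed.

Lemma card_windowed_mem l k (p : 'I_n.+1) :
  #|[set S in windowed_sets l k.+1 | p \in S]| <= 'C(l.*2.-1, k).
Proof.
set F := [set S in _ | _].
have del_inj : {in F &, injective (fun S => S :\ p)}.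
  move=> S1 S2; rewrite !inE => /andP[_ pS1] /andP[_ pS2] /= E.
  by rewrite -(setD1K pS1) -(setD1K pS2) E.
rewrite -(card_in_imset del_inj).
apply: leq_trans (leq_bin2l k (card_window (p + l.-1 * n) l.*2.-1)).
rewrite -cards_draws; apply/subset_leq_card/subsetP=> _ /imsetP[S + ->].
rewrite !inE => /andP[/andP[/eqP cardS /existsP[i sSw]] pS].
rewrite (cardsD1 p S) pS in cardS; rewrite -(eqn_add2l 1) cardS eqxx andbT.
apply/subsetP=> q; rewrite inE => /andP[_ qS].
exact: window_arc (subsetP sSw _ pS) (subsetP sSw _ qS).
Qed.

Lemma card_windowed l k : #|windowed_sets l k.+1| <= n.+1 * 'C(l.*2.-1, k).
Proof.
apply: leq_trans (_ : #|\bigcup_(p : 'I_n.+1) [set S in windowed_sets l k.+1 | p \in S]| <= _).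
  apply/subset_leq_card/subsetP=> S SW; have := SW; rewrite inE => /andP[/eqP cardS _].
  have /card_gt0P[p pS] : 0 < #|S| by rewrite cardS.
  by apply/bigcupP; exists p; rewrite // inE SW.
apply: leq_trans (leq_card_bigcup _ _) _.
apply: leq_trans (_ : _ <= \sum_(p : 'I_n.+1) 'C(l.*2.-1, k)) _.
  by apply: leq_sum => p _; apply: card_windowed_mem.
by rewrite sum_nat_const card_ord.
Qed.

End Windows.

Lemma packing_bound (X : finType) (F : {set {set X}}) (U : {set X}) m k :
  (forall s, s \in F -> #|s| = m /\ s \subset U) ->
  (forall t s1 s2 : {set X}, #|t| = k -> s1 \in F -> s2 \in F ->
     t \subset s1 -> t \subset s2 -> s1 = s2) ->
  'C(m, k) * #|F| <= 'C(#|U|, k).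
Proof.
move=> F_sub F_packing.
set P := [set ts : {set X} * {set X} | [&& ts.2 \in F, ts.1 \subset ts.2 & #|ts.1| == k]].
have cardP : #|P| = 'C(m, k) * #|F|.
  rewrite -sum1_card (partition_big snd (mem F)) => [|[t s]]; last by rewrite inE => /and3P[].
  rewrite mulnC -sum_nat_const; apply: eq_bigr => s sF; have [<- _] := F_sub s sF.
  have pair_inj : injective (fun t : {set X} => (t, s)) by move=> t1 t2 [].
  rewrite -cards_draws -(card_imset _ pair_inj) sum1_card; apply: eq_card => -[t s'].
  rewrite unfold_in /= !inE /=.
  apply/andP/imsetP => [[/and3P[_ ts' kt] /eqP es] | [t' + [-> ->]]].
    by subst s'; exists t; rewrite // inE ts' kt.
  by rewrite inE => /andP[-> ->]; rewrite !andbT.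
have fst_inj : {in P &, injective fst}.
  move=> [t1 s1] [t2 s2]; rewrite !inE /= => /and3P[s1F ts1 /eqP kt] /and3P[s2F ts2 _] t12.
  by subst t2; rewrite (F_packing t1 s1 s2).
rewrite -cardP -(card_in_imset fst_inj) -cards_draws.
apply/subset_leq_card/subsetP=> y /imsetP[[t s] + ->]; rewrite !inE /= => /and3P[sF ts kt].
by rewrite kt andbT (subset_trans ts) //; have [_] := F_sub s sF.
Qed.

Lemma card_blocks (X : finType) (B : {set {set X}}) :
  partial_SQS B -> 4 * #|B| <= 'C(#|X|, 3).
Proof.
case=> B4 B_packing; rewrite -cardsT (_ : 4 = 'C(4, 3)) //.
apply: packing_bound => [s sB | t b1 b2 kt]; first by rewrite B4 ?subsetT.
exact: B_packing.
Qed.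

Lemma card_blocks_through (X : finType) (B : {set {set X}}) (x : X) :
  partial_SQS B -> 3 * #|[set b in B | x \in b]| <= 'C(#|X|.-1, 2).
Proof.
case=> B4 B_packing; set Bx := [set b in B | x \in b].
have del_inj : {in Bx &, injective (fun b : {set X} => b :\ x)}.
  move=> b1 b2; rewrite !inE => /andP[_ xb1] /andP[_ xb2] /= eq_del.
  by rewrite -(setD1K xb1) -(setD1K xb2) eq_del.
rewrite -(card_in_imset del_inj) -(cardsC1 x) (_ : 3 = 'C(3, 2)) //.
apply: packing_bound => [s /imsetP[b] | t s1 s2 kt /imsetP[b1] + -> /imsetP[b2] + ->].
  rewrite inE => /andP[bB xb] ->; split; last by apply/subsetP=> y; rewrite !inE => /andP[].
  by have := B4 b bB; rewrite (cardsD1 x b) xb /=; lia.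
rewrite !inE => /andP[b1B xb1] /andP[b2B xb2] tb1 tb2.
have xNt : x \notin t by apply/negP=> /(subsetP tb1); rewrite !inE eqxx.
have sub_block : forall b : {set X}, x \in b -> t \subset b :\ x -> x |: t \subset b.
  by move=> b xb tb; rewrite subUset sub1set xb (subset_trans tb) ?subD1set.
by rewrite (B_packing (x |: t) _ b1 b2) ?cardsU1 ?xNt ?kt ?sub_block.
Qed.

Lemma card_meets (D X : finType) (P : {set {set D}}) (Q : {set {set X}})
    (e : {set D} * {set X}) :
  #|[set e' in setX P Q | meets e e']| <=
  \sum_(p in e.1) #|[set S in P | p \in S]| * #|Q| +
  \sum_(x in e.2) #|P| * #|[set b in Q | x \in b]|.
Proof.
apply: leq_trans (_ : #|(\bigcup_(p in e.1) setX [set S in P | p \in S] Q) :|: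
                        (\bigcup_(x in e.2) setX P [set b in Q | x \in b])| <= _).
  apply/subset_leq_card/subsetP=> -[S b]; rewrite !inE /meets /= => /andP[/andP[SP bQ]].
  by case/orP=> /pred0Pn[y /andP[/= ye yf]]; apply/orP; [left | right];
    apply/bigcupP; exists y; rewrite // !inE ?SP ?bQ ?yf.
apply: leq_trans (leq_card_setU _ _).1 _; apply: leq_add;
  apply: leq_trans (leq_card_bigcup _ _) _; apply: eq_leq; apply: eq_bigr => y _;
  exact: cardsX.
Qed.

Definition bad_events n (X : finType) l (B : {set {set X}}) : {set {set 'I_n.+1} * {set X}} :=
  setX (windowed_sets n l 4) B.

Lemma sparse_arith n c b w : 80 * c + 3 <= n -> 4 * b <= 'C(n, 3) ->
  3 * w <= 4 * (n * c) * 'C(n.-1, 2) -> 4 * (4 * (c * b) + w) <= 'C(n, 4).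
Proof.
move=> n_large hb hw.
have diag := mul_bin_diag n 2; have left := mul_bin_left n 3.
have hb' := leq_mul (leqnn (4 * c)) hb.
have hn : 80 * c * 'C(n, 3) <= (n - 3) * 'C(n, 3) by rewrite leq_mul2r; lia.
nia.
Qed.

Lemma sparse_bad_events n (X : finType) l (B : {set {set X}}) (e : {set 'I_n.+1} * {set X}) :
  #|X| = n.+1 -> partial_SQS B -> 80 * 'C(l.*2.-1, 3) + 3 <= n.+1 ->
  #|e.1| = 4 -> #|e.2| = 4 ->
  4 * #|[set e' in bad_events n l B | meets e e']| <= 'C(n.+1, 4).
Proof.
move=> cardX sqs n_large cardS cardb.
set c := 'C(l.*2.-1, 3); set W := windowed_sets n l 4.
have first_sum : \sum_(p in e.1) #|[set S in W | p \in S]| * #|B| <= 4 * (c * #|B|).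
  apply: leq_trans (_ : _ <= \sum_(p in e.1) c * #|B|) _; last by rewrite sum_nat_const cardS.
  by apply: leq_sum => p _; rewrite leq_mul2r card_windowed_mem orbT.
pose w := \sum_(x in e.2) #|W| * #|[set b in B | x \in b]|.
have second_sum : 3 * w <= 4 * (n.+1 * c) * 'C(n.+1.-1, 2).
  apply: leq_trans (_ : _ <= \sum_(x in e.2) n.+1 * c * 'C(n, 2)) _.
    rewrite big_distrr; apply: leq_sum => x _ /=; rewrite mulnCA leq_mul ?card_windowed //.
    by have := card_blocks_through x sqs; rewrite cardX.
  by rewrite sum_nat_const cardb mulnA.
apply: leq_trans (leq_mul (leqnn 4) (card_meets _ _ e)) _.
have blocks : 4 * #|B| <= 'C(n.+1, 3) by rewrite -cardX card_blocks.
apply: leq_trans (sparse_arith n_large blocks second_sum).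
by rewrite leq_mul2l leq_add2r first_sum orbT.
Qed.

Lemma window_length_bound l n : 0 < l -> 10 ^ 9 * l ^ 3 <= 164 ^ 3 * n ->
  80 * 'C(l.*2.-1, 3) + 3 <= n /\ 5 <= n.
Proof.
move=> l_gt0 l_small; set m := l.*2.-1.
have binE : 'C(m, 3) * 6 = m * (m - 1) * (m - 2).
  by rewrite (bin_ffact m 3) !ffactnSr ffactn0 subn0 mul1n.
have m_le : m <= l.*2 by rewrite /m; lia.
have cube : m * (m - 1) * (m - 2) <= l.*2 * l.*2 * l.*2.
  by apply: leq_mul; [apply: leq_mul|]; lia.
have l3_gt0 : 0 < l ^ 3 by rewrite expn_gt0 l_gt0.
rewrite -!muln2 in cube; split; nia.
Qed.

Lemma cyc_window_image n (X : finType) (phi : 'I_n.+1 -> X) (i : 'I_n.+1) l :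
  cyc_window phi i l = phi @: window n i l.
Proof.
apply/setP=> x; rewrite inE; apply/existsP/imsetP.
  case=> j /existsP[k /andP[kE /eqP <-]]; exists k => //.
  by rewrite mem_window; apply/existsP; exists j.
case=> k; rewrite mem_window => /existsP[j kE] ->.
by exists j; apply/existsP; exists k; rewrite kE eqxx.
Qed.

Lemma avoiding_bad_events_good n (X : finType) l (B : {set {set X}})
    (f : {ffun 'I_n.+1 -> X}) :
  partial_SQS B -> f \in avoiding (injections 'I_n.+1 X) hitting (bad_events n l B) ->
  cyclically_good B f l.
Proof.
case=> B4 _; rewrite !inE => /andP[/injectiveP f_inj /forall_inP f_avoids] i b bB.
rewrite cyc_window_image => b_sub.
set S := f @^-1: b.
have fSb : f @: S = b.
  apply/setP=> x; apply/imsetP/idP => [[k + ->] | xb]; first by rewrite inE.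
  have /imsetP[k _ xE] := subsetP b_sub x xb.
  by exists k; rewrite // inE -xE.
have S_window : S \subset window n i l.
  by apply/subsetP=> k; rewrite inE => /(subsetP b_sub); rewrite mem_imset.
have cardS : #|S| = 4 by rewrite -(card_imset _ f_inj) fSb B4.
have bad : (S, b) \in bad_events n l B.
  by rewrite inE /= bB andbT inE cardS eqxx; apply/existsP; exists i.
by have := f_avoids _ bad; rewrite inE /= fSb eqxx.
Qed.

Lemma exists_injection_avoiding_bad_events n (X : finType) l (B : {set {set X}}) :
  #|X| = n.+1 -> partial_SQS B -> 80 * 'C(l.*2.-1, 3) + 3 <= n.+1 -> 4 < n.+1 ->
  exists f, f \in avoiding (injections 'I_n.+1 X) hitting (bad_events n l B).
Proof.
move=> cardX sqs n_large n_gt4; set EV := bad_events n l B.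
have event_cards e : e \in EV -> #|e.1| = 4 /\ #|e.2| = 4.
  by case: e => S b; rewrite !inE /= => /andP[/andP[/eqP -> _] /(proj1 sqs)].
have lopsided e (M : {set {set 'I_n.+1} * {set X}}) : e \in EV -> M \subset EV ->
    (forall e', e' \in M -> ~~ meets e e') ->
    'C(n.+1, 4) * #|avoiding (injections _ _) hitting M :&: hitting e| <=
    #|avoiding (injections _ _) hitting M|.
  move=> /event_cards[card1 card2] _ indep.
  by have := switching (etrans card1 (esym card2)) indep; rewrite card1 cardX.
have sparse e : e \in EV -> 4 * #|[set e' in EV | meets e e']| <= 'C(n.+1, 4).
  by move=> /event_cards[card1 card2]; apply: sparse_bad_events.
have C_gt2 : 2 < 'C(n.+1, 4) by apply: leq_trans (leq_bin2l 4 n_gt4).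
have inj_gt0 : 0 < #|injections 'I_n.+1 X|.
  by rewrite card_inj_ffuns card_ord cardX ffact_gt0.
exact/card_gt0P/(avoiding_gt0 lopsided sparse C_gt2 inj_gt0 (subxx EV)).
Qed.

Theorem corollary4 (X : finType) (n : nat) (B : {set {set X}}) :
  #|X| = n -> 4 <= n -> partial_SQS B ->
  forall l : nat, 0 < l -> 10 ^ 9 * l ^ 3 <= 164 ^ 3 * n ->
  exists phi : 'I_n -> X, bijective phi /\ cyclically_good B phi l.
Proof.
move=> cardX _ sqs l l_gt0 l_small.
have [n_large n_gt4] := window_length_bound l_gt0 l_small.
case: n cardX l_small n_large n_gt4 => [//|n] cardX _ n_large n_gt4.
have [f f_good] := exists_injection_avoiding_bad_events cardX sqs n_large n_gt4.
have f_inj : injective f by move: f_good; rewrite !inE => /andP[/injectiveP].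
exists f; split; last exact: avoiding_bad_events_good.
by apply: inj_card_bij f_inj _; rewrite card_ord cardX.
Qed.
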